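(* Let $n \ge 2$ and let $\mathcal{B}$ be a non-degenerate deformation of the type $B_n$ Coxeter arrangement in $\mathbb{R}^n$. Let $H_0 \in \mathcal{B}$. Then the restriction $\mathcal{B}^{H_0}$, viewed in $\mathbb{R}^{n-1}$ via the isomorphism $H_0 \to \mathbb{R}^{n-1}$ that deletes one coordinate (the coordinate $x_k$ if $H_0 : x_k = a$, and the coordinate $x_l$ if $H_0 : x_k \pm x_l = a$ with $k<l$), is a non-degenerate deformation of the type $B_{n-1}$ Coxeter arrangement in $\mathbb{R}^{n-1}$.
   Context: A non-degenerate deformation of the type $B_n$ Coxeter arrangement in $\mathbb{R}^n$ is a finite hyperplane arrangement of the form $\{x_i = a_i^{(1)},\ldots,a_i^{(r_i)}\} \cup \{x_i-x_j = b_{ij}^{(1)},\ldots,b_{ij}^{(s_{ij})}\} \cup \{x_i+x_j = c_{ij}^{(1)},\ldots,c_{ij}^{(t_{ij})}\}$ (over $1\le i\le n$ resp. $1 \le i\ne j\le n$) with all constants real and $r_i,s_{ij},t_{ij} \ge 1$, i.e. every hyperplane is parallel to one of $x_i=0$, $x_i-x_j=0$, $x_i+x_j=0$, and each of these directions contains at least one hyperplane of the arrangement. For $H_0 \in \mathcal{B}$, the restriction is $\mathcal{B}^{H_0} = \{H_0 \cap H : H \in \mathcal{B}\setminus\{H_0\},\ H_0\cap H \neq \emptyset\}$, an arrangement in the affine space $H_0$. *)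

From HB Require Import structures.
From mathcomp Require Import all_boot all_order all_algebra.
From mathcomp Require Import boolp classical_sets cardinality reals.
Set Implicit Arguments. Unset Strict Implicit. Unset Printing Implicit Defensive.
Import Order.TTheory GRing.Theory Num.Theory.
Local Open Scope ring_scope.
Local Open Scope classical_set_scope.

Section BArr.
Variable R : realType.

Definition hp_coord n (i : 'I_n) (a : R) : set 'rV[R]_n :=
  [set x | x ord0 i = a].
Definition hp_minus n (i j : 'I_n) (b : R) : set 'rV[R]_n :=
  [set x | x ord0 i - x ord0 j = b].
Definition hp_plus n (i j : 'I_n) (c : R) : set 'rV[R]_n :=
  [set x | x ord0 i + x ord0 j = c].

Definition nondeg_Bdef n (B : set (set 'rV[R]_n)) : Prop :=
  finite_set B /\
  (forall H, B H ->
      (exists i a, H = hp_coord i a)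
   \/ (exists i j b, i != j /\ H = hp_minus i j b)
   \/ (exists i j c, i != j /\ H = hp_plus i j c)) /\
  (forall i, exists a, B (hp_coord i a)) /\
  (forall i j, i != j -> exists b, B (hp_minus i j b)) /\
  (forall i j, i != j -> exists c, B (hp_plus i j c)).

Definition restriction n (B : set (set 'rV[R]_n)) (H0 : set 'rV[R]_n)
  : set (set 'rV[R]_n) :=
  [set K | exists2 H, B H /\ H <> H0 & K = H0 `&` H /\ K !=set0].

Definition delete_coord m (d : 'I_m.+1) (x : 'rV[R]_m.+1) : 'rV[R]_m :=
  \row_(j < m) x ord0 (lift d j).

Definition deletion_index m (H0 : set 'rV[R]_m.+1) (d : 'I_m.+1) : Prop :=
  (exists a, H0 = hp_coord d a) \/
  (exists (k : 'I_m.+1) a, (k < d)%N /\ (H0 = hp_minus k d a \/ H0 = hp_plus k d a)).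

Definition restriction_del m (B : set (set 'rV[R]_m.+1)) (H0 : set 'rV[R]_m.+1)
  (d : 'I_m.+1) : set (set 'rV[R]_m) :=
  [set delete_coord d @` K | K in restriction B H0].

End BArr.

(* The hyperplane H0 is the graph x_d = alpha + sigma x_k of an affine function
   of the other coordinates, with sigma in {0, 1, -1}: sigma = 0 when H0 is
   x_d = a (k is then arbitrary, which is where m >= 1 is used), and sigma = -+1
   when H0 is x_k +- x_d = a.  Deleting x_d is thus a bijection from H0 onto
   R^m, inverse to the substitution x_d := alpha + sigma x_k, so the image of
   H0 `&` H is the preimage of H under that substitution.  Substituting into
   x_i = a or x_i +- x_j = c gives an equation of the same kind, except when
   x_k then occurs twice: x_k + x_k = c' is a coordinate hyperplane, while
   x_k - x_k = c' defines the empty set or the whole space, and the latter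
   forces H = H0.  Each direction of B_{n-1} is reached from a hyperplane of B
   in the lifted direction, which never involves x_d. *)

From HB Require Import structures.
From mathcomp Require Import all_boot all_order all_algebra.
From mathcomp Require Import boolp classical_sets cardinality reals.
From mathcomp Require Import lra.
Set Implicit Arguments. Unset Strict Implicit. Unset Printing Implicit Defensive.
Import Order.TTheory GRing.Theory Num.Theory.
Local Open Scope ring_scope.
Local Open Scope classical_set_scope.

Section BHyperplanes.
Variable R : realType.

Definition is_Bhyperplane n (H : set 'rV[R]_n) : Prop :=
     (exists i a, H = hp_coord i a)
  \/ (exists i j b, i != j /\ H = hp_minus i j b)
  \/ (exists i j c, i != j /\ H = hp_plus i j c).

Definition hp_pair n (i j : 'I_n) (s c : R) : set 'rV[R]_n :=
  [set x | x ord0 i + s * x ord0 j = c].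

Lemma hp_minusE n (i j : 'I_n) (b : R) : hp_minus i j b = hp_pair i j (-1) b.
Proof. by apply/seteqP; split => x; rewrite /hp_minus /hp_pair /= => h; lra. Qed.

Lemma hp_plusE n (i j : 'I_n) (c : R) : hp_plus i j c = hp_pair i j 1 c.
Proof. by apply/seteqP; split => x; rewrite /hp_plus /hp_pair /= => h; lra. Qed.

Lemma hp_pair0 n (i j : 'I_n) (c : R) : hp_pair i j 0 c = hp_coord i c.
Proof. by apply/seteqP; split => x; rewrite /hp_coord /hp_pair /= mul0r addr0. Qed.

Lemma hp_pair_diag n (i : 'I_n) (c : R) : hp_pair i i 1 c = hp_coord i (c / 2).
Proof. by apply/seteqP; split => x; rewrite /hp_coord /hp_pair /= => h; lra. Qed.

Lemma hp_pairC n (i j : 'I_n) (s c : R) :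
  s ^+ 2 = 1 -> hp_pair i j s c = hp_pair j i s (s * c).
Proof.
move=> /eqP; rewrite sqrf_eq1 => /orP[]/eqP->;
  by apply/seteqP; split => x; rewrite /hp_pair /= => h; lra.
Qed.

Lemma is_Bhyperplane_coord n (i : 'I_n) (a : R) : is_Bhyperplane (hp_coord i a).
Proof. by left; exists i, a. Qed.

Lemma is_Bhyperplane_pair n (i j : 'I_n) (s c : R) :
  i != j -> s ^+ 2 = 1 -> is_Bhyperplane (hp_pair i j s c).
Proof.
move=> ij /eqP; rewrite sqrf_eq1 => /orP[]/eqP->.
  by right; right; exists i, j, c; rewrite hp_plusE.
by right; left; exists i, j, c; rewrite hp_minusE.
Qed.

Lemma is_Bhyperplane_cases n (H : set 'rV[R]_n) : is_Bhyperplane H ->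
     (exists i a, H = hp_coord i a)
  \/ (exists i j s c, [/\ i != j, s ^+ 2 = 1 & H = hp_pair i j s c]).
Proof.
case=> [|[]] [i] [j]; first by left; exists i, j.
  by move=> [b [ij ->]]; right; exists i, j, (-1), b; rewrite hp_minusE sqrrN expr1n.
by move=> [c [ij ->]]; right; exists i, j, 1, c; rewrite hp_plusE expr1n.
Qed.

Definition axis_point n (i : 'I_n) (c : R) : 'rV[R]_n :=
  \row_l (if l == i then c else 0).

Lemma axis_pointE n (i : 'I_n) c l :
  axis_point i c ord0 l = if l == i then c else 0.
Proof. by rewrite mxE. Qed.

Lemma hp_coord_neq0 n (i : 'I_n) (a : R) : hp_coord i a !=set0.
Proof. by exists (axis_point i a); rewrite /hp_coord /= axis_pointE eqxx. Qed.

Lemma hp_coord_neqT n (i : 'I_n) (a : R) : hp_coord i a <> setT.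
Proof.
move=> /seteqP[_ /(_ (axis_point i (a + 1)) I)].
by rewrite /hp_coord /= axis_pointE eqxx => h; lra.
Qed.

Lemma hp_pair_neq0 n (i j : 'I_n) (s c : R) : i != j -> hp_pair i j s c !=set0.
Proof.
move=> ij; exists (axis_point i c).
by rewrite /hp_pair /= !axis_pointE eqxx eq_sym (negbTE ij) mulr0 addr0.
Qed.

Lemma hp_pair_neqT n (i j : 'I_n) (s c : R) : i != j -> hp_pair i j s c <> setT.
Proof.
move=> ij /seteqP[_ /(_ (axis_point i (c + 1)) I)].
by rewrite /hp_pair /= !axis_pointE eqxx eq_sym (negbTE ij) mulr0 addr0 => h; lra.
Qed.

End BHyperplanes.

Lemma finite_restriction_del (R : realType) m (B : set (set 'rV[R]_m.+1)) H0 d :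
  finite_set B -> finite_set (restriction_del B H0 d).
Proof.
move=> finB; apply: finite_image.
apply: (sub_finite_set _ (finite_image (fun H => H0 `&` H) finB)).
by move=> K [H [BH _] [-> _]]; exists H.
Qed.

Section GraphHyperplane.
Variables (R : realType) (m : nat) (d : 'I_m.+1) (k : 'I_m) (alpha sigma : R).

Definition graph_hp : set 'rV[R]_m.+1 :=
  [set x | x ord0 d = alpha + sigma * x ord0 (lift d k)].

Definition graph_point (y : 'rV[R]_m) : 'rV[R]_m.+1 :=
  \row_j (if unlift d j is Some j' then y ord0 j' else alpha + sigma * y ord0 k).

Lemma graph_point_lift y j : graph_point y ord0 (lift d j) = y ord0 j.
Proof. by rewrite mxE liftK. Qed.

Lemma graph_point_d y : graph_point y ord0 d = alpha + sigma * y ord0 k.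
Proof. by rewrite mxE unlift_none. Qed.

Lemma graph_pointP y : graph_hp (graph_point y).
Proof. by rewrite /graph_hp /= graph_point_d graph_point_lift. Qed.

Lemma graph_pointK : cancel graph_point (delete_coord d).
Proof. by move=> y; apply/rowP => j; rewrite mxE graph_point_lift. Qed.

Lemma delete_coordK x : graph_hp x -> graph_point (delete_coord d x) = x.
Proof.
move=> gx; apply/rowP => j; rewrite mxE.
by case: unliftP => [j'|] ->; rewrite mxE // gx.
Qed.

Lemma image_delete_coord_graphI (H : set 'rV[R]_m.+1) :
  delete_coord d @` (graph_hp `&` H) = graph_point @^-1` H.
Proof.
apply/seteqP; split => y /=.
  by case=> x [gx Hx] <-; rewrite delete_coordK.
by move=> Hy; exists (graph_point y); [split; first exact: graph_pointP|exact: graph_pointK].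
Qed.

Lemma preimage_graph_hp : graph_point @^-1` graph_hp = setT.
Proof. by apply/seteqP; split => y // _; exact: graph_pointP. Qed.

Lemma preimage_coord_lift i a :
  graph_point @^-1` hp_coord (lift d i) a = hp_coord i a.
Proof. by apply/seteqP; split => y; rewrite /hp_coord /= graph_point_lift. Qed.

Lemma preimage_pair_lift i j s c :
  graph_point @^-1` hp_pair (lift d i) (lift d j) s c = hp_pair i j s c.
Proof. by apply/seteqP; split => y; rewrite /hp_pair /= !graph_point_lift. Qed.

Lemma preimage_pair_d i s c :
  graph_point @^-1` hp_pair (lift d i) d s c = hp_pair i k (s * sigma) (c - s * alpha).
Proof.
apply/seteqP; split => y; rewrite /hp_pair /= graph_point_lift graph_point_d => h; lra.
Qed.

Hypothesis sigma_sign : sigma = 0 \/ sigma ^+ 2 = 1.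

Lemma preimage_coord_d_Bhyperplane a :
  graph_point @^-1` hp_coord d a !=set0 -> hp_coord d a <> graph_hp ->
  is_Bhyperplane (graph_point @^-1` hp_coord d a).
Proof.
case: sigma_sign => [s0|/eqP]; last first.
  rewrite sqrf_eq1 => /orP[]/eqP s1; left; exists k, (sigma * (a - alpha));
  by apply/seteqP; split => y; rewrite /hp_coord /= graph_point_d s1 => h; lra.
move=> [y]; rewrite /hp_coord /= graph_point_d s0 mul0r addr0 => <-; case.
by apply/seteqP; split => x; rewrite /hp_coord /graph_hp /= s0 mul0r addr0.
Qed.

Lemma pair_graph_degenerate s c : s ^+ 2 = 1 -> s * sigma = -1 ->
  graph_point @^-1` hp_pair (lift d k) d s c !=set0 ->
  hp_pair (lift d k) d s c = graph_hp.
Proof.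
move=> s2 ss [y]; rewrite preimage_pair_d /hp_pair /= ss => h.
have {h} -> : c = s * alpha by lra.
rewrite /hp_pair /graph_hp.
have -> : sigma = - s by rewrite -[sigma]mul1r -s2 expr2 -mulrA ss mulrN1.
move/eqP: s2; rewrite sqrf_eq1 => /orP[]/eqP ->;
  by apply/seteqP; split => x /= h; lra.
Qed.

Lemma preimage_pair_d_Bhyperplane i s c : s ^+ 2 = 1 ->
  graph_point @^-1` hp_pair (lift d i) d s c !=set0 ->
  hp_pair (lift d i) d s c <> graph_hp ->
  is_Bhyperplane (graph_point @^-1` hp_pair (lift d i) d s c).
Proof.
move=> s2 ne neq; rewrite preimage_pair_d.
case: sigma_sign => [s0|sigma2].
  by rewrite s0 mulr0 hp_pair0; exact: is_Bhyperplane_coord.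
have ssigma2 : (s * sigma) ^+ 2 = 1 by rewrite exprMn s2 sigma2 mulr1.
have [ik|ik] := eqVneq i k; last exact: is_Bhyperplane_pair.
rewrite ik in ne neq *; move/eqP: ssigma2; rewrite sqrf_eq1 => /orP[]/eqP ss.
  by rewrite ss hp_pair_diag; exact: is_Bhyperplane_coord.
by case: neq; exact: pair_graph_degenerate.
Qed.

Lemma preimage_Bhyperplane H : is_Bhyperplane H ->
  graph_point @^-1` H !=set0 -> H <> graph_hp ->
  is_Bhyperplane (graph_point @^-1` H).
Proof.
case/is_Bhyperplane_cases => [[i [a ->]]|[i [j [s [c [ij s2 ->]]]]]].
  case: (unliftP d i) => [i'|] ->; last exact: preimage_coord_d_Bhyperplane.
  by rewrite preimage_coord_lift => _ _; exact: is_Bhyperplane_coord.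
case: (unliftP d j) => [j'|] -> in ij *; last first.
  case: (unliftP d i) ij => [i'|] ->; last by rewrite eqxx.
  by move=> _; exact: preimage_pair_d_Bhyperplane.
case: (unliftP d i) ij => [i'|] -> ij.
  rewrite preimage_pair_lift => _ _; apply: is_Bhyperplane_pair => //.
  by apply: contra ij => /eqP ->.
rewrite hp_pairC //; exact: preimage_pair_d_Bhyperplane.
Qed.

Lemma restriction_del_preimage B H : B H ->
  graph_point @^-1` H !=set0 -> graph_point @^-1` H <> setT ->
  restriction_del B graph_hp d (graph_point @^-1` H).
Proof.
move=> BH [y Hy] nT; exists (graph_hp `&` H); last exact: image_delete_coord_graphI.
exists H; first by split=> // E; apply: nT; rewrite E preimage_graph_hp.
by split=> //; exists (graph_point y); split=> //; exact: graph_pointP.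
Qed.

Lemma restriction_del_coord B i a : B (hp_coord (lift d i) a) ->
  restriction_del B graph_hp d (hp_coord i a).
Proof.
move=> BH; rewrite -preimage_coord_lift.
by apply: restriction_del_preimage; rewrite // preimage_coord_lift;
  [exact: hp_coord_neq0 | exact: hp_coord_neqT].
Qed.

Lemma restriction_del_pair B i j s c : i != j ->
  B (hp_pair (lift d i) (lift d j) s c) ->
  restriction_del B graph_hp d (hp_pair i j s c).
Proof.
move=> ij BH; rewrite -preimage_pair_lift.
by apply: restriction_del_preimage; rewrite // preimage_pair_lift;
  [exact: hp_pair_neq0 | exact: hp_pair_neqT].
Qed.

Lemma nondeg_Bdef_restriction_graph B :
  nondeg_Bdef B -> nondeg_Bdef (restriction_del B graph_hp d).
Proof.
move=> [finB [BB [Bcoord [Bminus Bplus]]]].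
split; first exact: finite_restriction_del.
split.
  move=> _ [_ [H [BH neq] [-> [x Hx]]] <-].
  rewrite image_delete_coord_graphI; apply: preimage_Bhyperplane => //.
    exact: BB.
  by exists (delete_coord d x); rewrite -image_delete_coord_graphI; exists x.
split.
  by move=> i; have [a Ba] := Bcoord (lift d i); exists a; exact: restriction_del_coord.
split=> i j ij; have lij : lift d i != lift d j by rewrite (inj_eq lift_inj).
  have [b Bb] := Bminus _ _ lij; exists b.
  by rewrite hp_minusE; apply: restriction_del_pair; rewrite -?hp_minusE.
have [c Bc] := Bplus _ _ lij; exists c.
by rewrite hp_plusE; apply: restriction_del_pair; rewrite -?hp_plusE.
Qed.

End GraphHyperplane.

Lemma deletion_index_graph_hp (R : realType) m (H0 : set 'rV[R]_m.+1) d :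
  (0 < m)%N -> deletion_index H0 d ->
  exists k alpha sigma, (sigma = 0 \/ sigma ^+ 2 = 1) /\ H0 = graph_hp d k alpha sigma.
Proof.
move=> m_gt0 [[a ->]|[k0 [a [k0d H0E]]]].
  exists (Ordinal m_gt0), a, 0; split; first by left.
  by apply/seteqP; split => x; rewrite /hp_coord /graph_hp /= mul0r addr0.
case: (unliftP d k0) k0d H0E => [k|->]; last by rewrite ltnn.
move=> -> _ [] ->; [exists k, (- a), 1 | exists k, a, (-1)];
  rewrite ?sqrrN expr1n; split; do ?by right.
  by apply/seteqP; split => x; rewrite /hp_minus /graph_hp /= => h; lra.
by apply/seteqP; split => x; rewrite /hp_plus /graph_hp /= => h; lra.
Qed.

Theorem lemma3p2 (R : realType) (m : nat) (hm : (1 <= m)%N)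
  (B : set (set 'rV[R]_m.+1)) (H0 : set 'rV[R]_m.+1) (d : 'I_m.+1) :
  nondeg_Bdef B -> B H0 -> deletion_index H0 d ->
  nondeg_Bdef (restriction_del B H0 d).
Proof.
move=> nondegB _ /(deletion_index_graph_hp hm) [k [alpha [sigma [sign ->]]]].
exact: nondeg_Bdef_restriction_graph.
Qed.
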